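(* Let $\Omega$ be a discrete signature, let $A$ be a profinite $\Omega$-algebra, and let $\theta$ be a closed congruence on $A$ of countable index (i.e., $A/\theta$ is countable). Then the quotient topological algebra $A/\theta$ (with the quotient topology) is profinite.
   Context: A signature is a disjoint union $\Omega=\biguplus_{n\in\mathbb{N}}\Omega_n$; it is discrete if each $\Omega_n$ carries the discrete topology. A topological $\Omega$-algebra is a topological space $A$ with continuous evaluation maps $E_n^A:\Omega_n\times A^n\to A$. Compact spaces are Hausdorff by convention. A topological algebra is profinite if it is compact and, for any two distinct elements, there is a continuous homomorphism into a finite discrete $\Omega$-algebra separating them. A congruence is closed if it is a closed subset of $A\times A$. *)

From HB Require Import structures.
From mathcomp Require Import all_boot all_algebra generic_quotient.
From mathcomp Require Import boolp classical_sets functions cardinality.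
From mathcomp Require Import topology.

Set Implicit Arguments.
Unset Strict Implicit.
Unset Printing Implicit Defensive.

Local Open Scope classical_set_scope.
Local Open Scope quotient_scope.

(** A discrete signature: for each arity n, a set Omega n of n-ary operation
    symbols, carrying the discrete topology. *)
Definition signature := nat -> discreteTopologicalType.

Section TopAlg.
Variable Omega : signature.

Definition ops (A : Type) := forall n : nat, Omega n -> ('I_n -> A) -> A.

Definition eval_map (A : topologicalType) (E : ops A) (n : nat) :
    (Omega n * {ptws 'I_n -> A})%type -> A :=
  fun p => E n p.1 p.2.

Definition is_topological_algebra (A : topologicalType) (E : ops A) : Prop :=
  forall n : nat, continuous (@eval_map A E n).

Definition is_hom (A B : Type) (EA : ops A) (EB : ops B) (f : A -> B) : Prop :=
  forall (n : nat) (s : Omega n) (a : 'I_n -> A), f (EA n s a) = EB n s (f \o a).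

Definition profinite (A : topologicalType) (E : ops A) : Prop :=
  [/\ is_topological_algebra E, compact [set: A], hausdorff_space A &
    forall x y : A, x <> y ->
      exists (B : discreteTopologicalType) (EB : ops B) (f : A -> B),
        [/\ finite_set [set: B], is_topological_algebra EB, continuous f,
            is_hom E EB f & f x <> f y]].

Record closed_congruence (A : topologicalType) (E : ops A) := ClosedCongruence {
  cong_rel :> A -> A -> Prop;
  cong_refl : forall x, cong_rel x x;
  cong_sym : forall x y, cong_rel x y -> cong_rel y x;
  cong_trans : forall x y z, cong_rel x y -> cong_rel y z -> cong_rel x z;
  cong_compat : forall (n : nat) (s : Omega n) (a b : 'I_n -> A),
      (forall i, cong_rel (a i) (b i)) -> cong_rel (E n s a) (E n s b);
  cong_closed : closed [set p : A * A | cong_rel p.1 p.2]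
}.

Section Quot.
Variables (A : topologicalType) (E : ops A) (theta : closed_congruence E).

Definition cong_brel : rel A := fun x y => `[< theta x y >].

Lemma cong_brel_refl : reflexive cong_brel.
Proof. by move=> x; apply/asboolP; apply: cong_refl. Qed.

Lemma cong_brel_sym : symmetric cong_brel.
Proof.
by move=> x y; apply/asboolP/asboolP; apply: cong_sym.
Qed.

Lemma cong_brel_trans : transitive cong_brel.
Proof.
by move=> y x z /asboolP h1 /asboolP h2; apply/asboolP; apply: cong_trans h1 h2.
Qed.

Definition cong_equiv : equiv_rel A :=
  EquivRel cong_brel cong_brel_refl cong_brel_sym cong_brel_trans.

Definition quot_space : topologicalType :=
  quotient_topology {eq_quot cong_equiv}.

Definition quot_ops : ops quot_space :=
  fun n s q => (\pi_(quot_space) (@E n s (fun i => repr (q i))) : quot_space).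

End Quot.
End TopAlg.

Arguments quot_space {Omega A E} theta.
Arguments quot_ops {Omega A E} theta.
Arguments profinite {Omega A} E.

(* Let q1 <> q2 in A/theta.  A/theta is compact and normal, so Urysohn's lemma
   gives a continuous real function on it separating q1 from q2; its range is
   countable, so some level cuts A/theta into two clopen pieces, whose preimage
   W in A is clopen and theta-saturated.  In a profinite algebra the syntactic
   congruence of a clopen set has open classes, so A modulo the syntactic
   congruence of W is a finite discrete algebra; theta is finer than it, which
   yields a continuous homomorphism from A/theta to a finite algebra separating
   q1 from q2.  Hausdorffness of A/theta and continuity of its operations follow
   from such separating homomorphisms by compactness. *)

From HB Require Import structures.
From mathcomp Require Import all_boot all_order all_algebra generic_quotient.
From mathcomp Require Import boolp classical_sets functions cardinality.
From mathcomp Require Import topology reals ereal normedtype numfun.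
From mathcomp Require Import lebesgue_measure Rstruct.

Set Implicit Arguments.
Unset Strict Implicit.
Unset Printing Implicit Defensive.
Local Open Scope classical_set_scope.
Local Open Scope quotient_scope.
Import Order.TTheory GRing.Theory Num.Theory.
Import numFieldNormedType.Exports.

Section UnaryPolynomials.
Variables (Omega : signature) (A : Type) (E : ops Omega A).

Definition set_coord n (a : 'I_n -> A) (j : 'I_n) (x : A) : 'I_n -> A :=
  fun i => if i == j then x else a i.

Inductive unary_poly : (A -> A) -> Prop :=
| unary_poly_id : unary_poly id
| unary_poly_op n (s : Omega n) (a : 'I_n -> A) (j : 'I_n) p :
    unary_poly p -> unary_poly (fun x => E s (set_coord a j (p x))).

Lemma unary_poly_comp p q : unary_poly p -> unary_poly q -> unary_poly (p \o q).
Proof. by move=> + uq; elim=> [|n s a j r _ IH] //; exact: unary_poly_op. Qed.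

Definition compatible (rho : A -> A -> Prop) :=
  forall n (s : Omega n) (a b : 'I_n -> A),
    (forall i, rho (a i) (b i)) -> rho (E s a) (E s b).

Lemma compatible_unary_poly rho p x y :
  (forall z, rho z z) -> compatible rho -> unary_poly p -> rho x y -> rho (p x) (p y).
Proof.
move=> rho_refl rho_compat; elim=> [//|n s a j q _ IH] /IH rxy.
by apply: rho_compat => i; rewrite /set_coord; case: eqP.
Qed.

Lemma compatible_coordwise rho :
  (forall x, rho x x) -> (forall x y z, rho x y -> rho y z -> rho x z) ->
  (forall n (s : Omega n) a j x y, rho x y ->
     rho (E s (set_coord a j x)) (E s (set_coord a j y))) ->
  compatible rho.
Proof.
move=> rho_refl rho_trans rho_coord n s a b ab.
pose mix k (i : 'I_n) := if (i < k)%N then b i else a i.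
suff mixP k : (k <= n)%N -> rho (E s a) (E s (mix k)).
  have -> : b = mix n by apply: funext => i; rewrite /mix ltn_ord.
  exact: mixP.
elim: k => [_|k IH kn].
  by have -> : mix 0%N = a by apply: funext => i; rewrite /mix ltn0.
apply: rho_trans (IH (ltnW kn)) _; pose j := Ordinal kn.
have -> : mix k = set_coord (mix k) j (a j).
  by apply: funext => i; rewrite /set_coord; case: eqP => [->|//]; rewrite /mix /= ltnn.
have -> : mix k.+1 = set_coord (mix k) j (b j).
  apply: funext => i; rewrite /set_coord; case: eqP => [->|ij].
    by rewrite /mix /= ltnSn.
  have /negbTE ik : nat_of_ord i != k by apply/eqP => ik; apply: ij; exact: val_inj.
  by rewrite /mix ltnS leq_eqVlt ik.
exact: rho_coord.
Qed.

Definition syntactic (V : set A) (x y : A) :=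
  forall p, unary_poly p -> (V (p x) <-> V (p y)).

Section Syntactic.
Variable V : set A.

Lemma syntactic_refl x : syntactic V x x.
Proof. by []. Qed.

Lemma syntactic_sym x y : syntactic V x y -> syntactic V y x.
Proof. by move=> xy p up; symmetry; exact: xy. Qed.

Lemma syntactic_trans x y z : syntactic V x y -> syntactic V y z -> syntactic V x z.
Proof. by move=> xy yz p up; rewrite (xy p up); exact: yz. Qed.

Lemma syntactic_saturated x y : syntactic V x y -> (V x <-> V y).
Proof. by move/(_ id unary_poly_id). Qed.

Lemma syntactic_compatible : compatible (syntactic V).
Proof.
apply: compatible_coordwise; [exact: syntactic_refl | exact: syntactic_trans |].
move=> n s a j x y xy p up.
exact: xy _ (unary_poly_comp up (unary_poly_op s a j unary_poly_id)).
Qed.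

Lemma sub_syntactic rho : (forall x, rho x x) -> compatible rho ->
  (forall x y, rho x y -> (V x <-> V y)) -> forall x y, rho x y -> syntactic V x y.
Proof.
by move=> rr rc rV x y xy p up; apply: rV; exact: compatible_unary_poly rr rc up xy.
Qed.

End Syntactic.
End UnaryPolynomials.

Lemma discrete_compact_finite (X : discreteTopologicalType) (K : set X) :
  compact K -> finite_set K.
Proof.
move=> /compact_near_coveringP cK.
pose F := [set S : set (set X) |
  exists2 D0, finite_set D0 & forall D, D0 `<=` D -> S D].
have FF : Filter F.
  split; first by exists set0.
    move=> S1 S2 [D1 fD1 S1D] [D2 fD2 S2D]; exists (D1 `|` D2).
      by rewrite finite_setU.
    by move=> D D12; split; [apply: S1D | apply: S2D] => x Dx;
      apply: D12; [left | right].
  by move=> S1 S2 S12 [D0 fD0 S1D]; exists D0 => // D /S1D /S12.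
have [D0 fD0 KD] : F [set D | K `<=` D].
  apply: (cK _ F (fun D x => D x) FF) => x Kx; exists ([set x], [set D | D x]).
    by split; [exact: discrete_set1 | exists [set x] => // D; apply].
  by case=> x' D /= [-> ].
exact: sub_finite_set (KD D0 (@subset_refl _ _)) fD0.
Qed.

Lemma nbhs_coordwise (I : finType) (T : topologicalType) (q : {ptws I -> T})
    (P : I -> set T) :
  (forall i, nbhs (q i) (P i)) ->
  nbhs q [set q' : {ptws I -> T} | forall i, P i (q' i)].
Proof.
move=> qP; apply: (@filter_forall _ I (fun i (q' : {ptws I -> T}) => P i (q' i))
  _ (nbhs_filter q)) => i.
exact: (@proj_continuous I (fun _ => T) i q _ (qP i)).
Qed.

Lemma nbhs_op_args (Omega : signature) (T : topologicalType) n (s : Omega n)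
    (q : {ptws 'I_n -> T}) (P : 'I_n -> set T) :
  (forall i, nbhs (q i) (P i)) ->
  nbhs ((s, q) : Omega n * {ptws 'I_n -> T})
    [set p | p.1 = s /\ forall i, P i (p.2 i)].
Proof.
move=> qP; exists ([set s], [set q' | forall i, P i (q' i)]).
  by split; [exact: discrete_set1 | exact: nbhs_coordwise].
by case=> s' q' /= [-> ?].
Qed.

Lemma discrete_topological_algebra (Omega : signature) (B : discreteTopologicalType)
    (EB : ops Omega B) :
  is_topological_algebra EB.
Proof.
move=> n [s q]; apply/discrete_cvg.
apply: filterS (nbhs_op_args s (fun i => discrete_set1 (q i))) => -[s' q'] /= [-> qq'].
by rewrite /eval_map /= (_ : q' = q) //; apply: funext.
Qed.

Section DiscreteSeparation.
Variable T : topologicalType.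

Lemma hausdorff_discrete_separation :
  (forall x y : T, x <> y ->
     exists (B : discreteTopologicalType) (g : T -> B), continuous g /\ g x <> g y) ->
  hausdorff_space T.
Proof.
move=> sep x y clxy; apply: contrapT => /sep [B [g [cg gxy]]].
have [z [/= zx zy]] :=
  clxy _ _ (cg x _ (discrete_set1 (g x))) (cg y _ (discrete_set1 (g y))).
by apply: gxy; rewrite -zx -zy.
Qed.

Lemma continuous_discrete_separation (Y : topologicalType) (h : Y -> T) :
  compact [set: T] ->
  (forall z w : T, z <> w -> exists (B : discreteTopologicalType) (g : T -> B),
     [/\ continuous g, continuous (g \o h) & g z <> g w]) ->
  continuous h.
Proof.
move=> cT sep y S Sy.
have /compact_near_coveringP cK : compact (~` S°).
  exact: subclosed_compact (open_closedC (@open_interior _ S)) cT (@subsetT _ _).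
have : \forall y' \near y, ~` S° `<=` (fun z => h y' <> z).
  apply: (cK _ _ (fun y' z => h y' <> z) (nbhs_filter y)) => z Kz.
  have zhy : z <> h y by move=> e; apply: Kz; rewrite e.
  have [B [g [cg cgh gzy]]] := sep z (h y) zhy.
  exists ([set z' | g z' = g z], [set y' | g (h y') = g (h y)]).
    by split; [exact: cg z _ (discrete_set1 (g z)) | exact: cgh y _ (discrete_set1 _)].
  by case=> z' y' /= [gz' gy'] e; apply: gzy; rewrite -gz' -e gy'.
apply: filterS => y' Ky'; apply: (@interior_subset _ S); apply: contrapT => nS.
exact: Ky' _ nS erefl.
Qed.

Lemma topological_algebra_discrete_separation (Omega : signature) (ET : ops Omega T) :
  compact [set: T] ->
  (forall x y : T, x <> y ->
     exists (B : discreteTopologicalType) (EB : ops Omega B) (g : T -> B),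
       [/\ continuous g, is_hom ET EB g & g x <> g y]) ->
  is_topological_algebra ET.
Proof.
move=> cT sep n; apply: continuous_discrete_separation cT _ => x y.
case/sep=> B [EB [g [cg hg gxy]]]; exists B, g; split => // -[s q].
apply/discrete_cvg.
have gq i := cg (q i) _ (discrete_set1 (g (q i))).
apply: filterS (nbhs_op_args s gq) => -[s' q'] /= [-> gq'].
by rewrite /eval_map /= !hg; congr (EB n s); apply: funext => i; exact: gq'.
Qed.

End DiscreteSeparation.

Lemma itv01_uncountable (R : realType) : ~ countable (`]0%R, 1%R[ : set R).
Proof.
move=> /countable_lebesgue_measure0.
rewrite lebesgue_measure_itv /= lte_fin ltr01 oppr0 adde0.
by move=> /eqP; rewrite eqe oner_eq0.
Qed.

(* By countability [f] omits some level [r] in ]0, 1[, so [f < r] is the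
   complement of the open set [f > r]. *)
Lemma countable_range_clopen_separation (R : realType) (T : topologicalType)
    (f : T -> R) (x y : T) :
  continuous f -> countable (range f) -> f x = 0%R -> f y = 1%R ->
  exists U : set T, [/\ open U, closed U, U x & ~ U y].
Proof.
move=> cf cfT fx0 fy1.
have [r r01 nr] : exists2 r, `]0%R, 1%R[ r & ~ range f r.
  apply: contrapT => nr; apply: (@itv01_uncountable R).
  apply: sub_countable cfT; apply: subset_card_le => r r01.
  by apply: contrapT => nfr; apply: nr; exists r.
have /andP[r0 r1] : (0 < r < 1)%R by move: r01; rewrite /= in_itv.
exists (f @^-1` [set t | (t < r)%R]); split.
- exact: (continuousP _).1 cf _ (@open_lt _ r).
- have -> : f @^-1` [set t | (t < r)%R] = ~` (f @^-1` [set t | (r < t)%R]).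
    apply/seteqP; split => z /=.
      by move=> zr rz; have := lt_trans zr rz; rewrite ltxx.
    by move=> nrz; case: (ltgtP (f z) r) => // fzr; exfalso; apply: nr; exists z.
  exact: open_closedC ((continuousP _).1 cf _ (@open_gt _ r)).
- by rewrite /= fx0.
- by rewrite /= fy1 => /(lt_trans r1); rewrite ltxx.
Qed.

Lemma countable_normal_clopen_separation (T : topologicalType) (x y : T) :
  normal_space T -> countable [set: T] -> closed [set x] -> closed [set y] ->
  x <> y -> exists U : set T, [/\ open U, closed U, U x & ~ U y].
Proof.
move=> nT cT clx cly xy.
have xy0 : [set x] `&` [set y] = set0 by apply/seteqP; split => // z [/= -> ].
have [f [cf fx fy _]] :=
  @urysohn_ext_itv T Rdefinitions.R nT _ _ 0%R 1%R clx cly xy0 ltr01.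
apply: (countable_range_clopen_separation cf).
- exact: sub_countable (card_image_le f setT) cT.
- by apply: fx; exists x.
- by apply: fy; exists y.
Qed.

Section OpenCongruences.
Variables (Omega : signature) (A : topologicalType) (E : ops Omega A).

Definition open_congruence (rho : A -> A -> Prop) :=
  [/\ forall x, rho x x, forall x y, rho x y -> rho y x, compatible E rho
    & forall x, nbhs x (rho x)].

Lemma open_congruenceI rho sigma : open_congruence rho -> open_congruence sigma ->
  open_congruence (fun x y => rho x y /\ sigma x y).
Proof.
case=> rr rs rc ro [sr ss sc so]; split.
- by move=> x; split.
- by move=> x y [/rs ? /ss ?].
- by move=> n s a b ab; split; [apply: rc | apply: sc] => i; case: (ab i).
- by move=> x; exact: filterI (ro x) (so x).
Qed.

Lemma hom_kernel_open_congruence (B : discreteTopologicalType) (EB : ops Omega B)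
    (f : A -> B) :
  continuous f -> is_hom E EB f -> open_congruence (fun x y => f x = f y).
Proof.
move=> cf hf; split => //.
- by move=> n s a b ab; rewrite !hf; congr (EB n s); apply: funext => i; exact: ab.
- by move=> x; apply: filterS (cf x _ (discrete_set1 (f x))) => y ->.
Qed.

(* Near [(x, y)] with [V x] and [~ V y], the kernel of a homomorphism to a finite
   algebra separating [x] from [y] separates the two sides; compactness of
   [V `*` ~` V], for the filter of relations finer than some open congruence,
   turns these into a single open congruence. *)
Lemma profinite_clopen_saturated (V : set A) : profinite E -> open V -> closed V ->
  exists2 rho, open_congruence rho & forall x y, rho x y -> (V x <-> V y).
Proof.
case=> _ cA _ sep oV clV.
pose F := [set S | exists2 rho0, open_congruence rho0 &
  forall rho : A -> A -> Prop, (forall x y, rho x y -> rho0 x y) -> S rho].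
have FF : Filter F.
  split.
  - by exists (fun _ _ => True) => //; split => // x; exact: filterT.
  - move=> S1 S2 [r1 c1 S1r] [r2 c2 S2r].
    exists (fun x y => r1 x y /\ r2 x y); first exact: open_congruenceI.
    by move=> rho sub; split; [apply: S1r | apply: S2r] => x y /sub [].
  - by move=> S1 S2 S12 [r c S1r]; exists r => // rho /S1r /S12.
have /compact_near_coveringP cV : compact (V `*` ~` V).
  by apply: compact_setX; apply: subclosed_compact cA _ => //; exact: open_closedC.
have [rho0 c0 rho0V] : F [set rho | V `*` ~` V `<=` [set z | ~ rho z.1 z.2]].
  apply: (cV _ F (fun rho z => ~ rho z.1 z.2) FF) => -[x y] [/= Vx nVy].
  have /sep [B [EB [f [_ _ cf hf fxy]]]] : x <> y by move=> e; apply: nVy; rewrite -e.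
  exists ([set z | f z.1 = f x /\ f z.2 = f y],
          [set rho | forall u v, rho u v -> f u = f v]).
    split.
      exists ([set u | f u = f x], [set v | f v = f y]); last by case=> u v /= [-> ->].
      by split; [exact: cf x _ (discrete_set1 _) | exact: cf y _ (discrete_set1 _)].
    by exists (fun u v => f u = f v) => //; exact: hom_kernel_open_congruence.
  by case=> -[u v] rho /= [[fu fv] rf] /rf; rewrite fu fv.
have sep0 x y : V x -> ~ V y -> ~ rho0 x y.
  by move=> Vx nVy; exact: rho0V rho0 (fun _ _ => id) (x, y) (conj Vx nVy).
have [_ s0 _ _] := c0; exists rho0 => // x y xy.
by split => [Vx|Vy]; apply: contrapT => nV; [apply: sep0 xy | apply: sep0 (s0 _ _ xy)].
Qed.

Lemma profinite_syntactic_nbhs (V : set A) : profinite E -> open V -> closed V ->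
  forall x, nbhs x (syntactic E V x).
Proof.
move=> pA oV clV x.
have [rho [rr _ rc ro] rV] := profinite_clopen_saturated pA oV clV.
by apply: filterS (ro x); exact: sub_syntactic rr rc rV x.
Qed.

End OpenCongruences.

Section SyntacticQuotient.
Variables (Omega : signature) (A : topologicalType) (E : ops Omega A) (V : set A).

Definition syntactic_rel : rel A := fun x y => `[< syntactic E V x y >].

Lemma syntactic_rel_refl : reflexive syntactic_rel.
Proof. by move=> x; apply/asboolP; exact: syntactic_refl. Qed.

Lemma syntactic_rel_sym : symmetric syntactic_rel.
Proof. by move=> x y; apply/asboolP/asboolP; exact: syntactic_sym. Qed.

Lemma syntactic_rel_trans : transitive syntactic_rel.
Proof.
by move=> y x z /asboolP xy /asboolP yz; apply/asboolP; exact: syntactic_trans xy yz.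
Qed.

Definition syntactic_quot :=
  {eq_quot EquivRel syntactic_rel
    syntactic_rel_refl syntactic_rel_sym syntactic_rel_trans}.

Definition syntactic_quotient : discreteTopologicalType :=
  discrete_topology syntactic_quot.

Definition syntactic_proj (x : A) : syntactic_quotient := \pi_syntactic_quot x.

Definition syntactic_ops : ops Omega syntactic_quotient :=
  fun n s q => syntactic_proj (E s (fun i => repr (q i : syntactic_quot))).

Lemma syntactic_projP x y : syntactic_proj x = syntactic_proj y <-> syntactic E V x y.
Proof. by split => [/eqmodP/asboolP | xy]; last apply/eqmodP/asboolP. Qed.

Lemma syntactic_proj_repr (q : syntactic_quot) : syntactic_proj (repr q) = q.
Proof. exact: reprK. Qed.

Lemma syntactic_proj_hom : is_hom E syntactic_ops syntactic_proj.
Proof.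
move=> n s a; apply/syntactic_projP; apply: syntactic_compatible => i.
by apply/syntactic_projP; rewrite syntactic_proj_repr.
Qed.

Hypothesis syntactic_open : forall x, nbhs x (syntactic E V x).

Lemma syntactic_proj_continuous : continuous syntactic_proj.
Proof.
move=> x; apply/discrete_cvg.
by apply: filterS (syntactic_open x) => y /syntactic_projP.
Qed.

Lemma syntactic_quotient_finite :
  compact [set: A] -> finite_set [set: syntactic_quotient].
Proof.
move=> cA; apply: discrete_compact_finite.
have -> : [set: syntactic_quotient] = syntactic_proj @` [set: A].
  apply/seteqP; split => // q _.
  by exists (repr (q : syntactic_quot)); rewrite ?syntactic_proj_repr.
apply: continuous_compact cA; exact: continuous_subspaceT syntactic_proj_continuous.
Qed.

End SyntacticQuotient.

Section ClosedQuotient.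
Variables (Omega : signature) (A : topologicalType) (E : ops Omega A)
  (theta : closed_congruence E).
Local Notation Q := (quot_space theta).

Lemma quot_projP x y : \pi_Q x = \pi_Q y <-> theta x y.
Proof. by split => [/eqmodP/asboolP | xy]; last apply/eqmodP/asboolP. Qed.

Lemma quot_proj_repr (q : Q) : \pi_Q (repr q) = q.
Proof. exact: reprK. Qed.

Hypothesis compactA : compact [set: A].

Lemma quot_compact : compact [set: Q].
Proof.
have -> : [set: Q] = \pi_Q @` [set: A].
  by apply/seteqP; split => // q _; exists (repr q); rewrite ?quot_proj_repr.
apply: continuous_compact compactA; exact: continuous_subspaceT pi_continuous.
Qed.

(* A point whose class misses the compact set [K] has a neighbourhood of
   points whose classes miss [K], because [theta] is closed. *)
Lemma saturation_closed (K : set A) :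
  closed K -> closed [set x | exists2 y, K y & theta x y].
Proof.
move=> clK x clx; apply: contrapT => nx.
have /compact_near_coveringP cK : compact K :=
  subclosed_compact clK compactA (@subsetT _ K).
have : \forall x' \near x, K `<=` (fun y => ~ theta x' y).
  apply: (cK _ _ (fun x' y => ~ theta x' y) (nbhs_filter x)) => y Ky.
  have o : open (~` [set p : A * A | theta p.1 p.2]) :=
    closed_openC (@cong_closed _ _ _ theta).
  have oxy : (~` [set p : A * A | theta p.1 p.2]) (x, y).
    by move=> /= xy; apply: nx; exists y.
  have [[U W] [Ux Wy] UW] := open_nbhs_nbhs (conj o oxy).
  exists (W, U) => //.
  by case=> y' x' /= [Wy' Ux'] xy'; exact: (UW (x', y') (conj Ux' Wy') xy').
by move=> /clx [z [[y Ky zy] zK]]; exact: zK y Ky zy.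
Qed.

Lemma quot_proj_closed (K : set A) : closed K -> closed (\pi_Q @` K).
Proof.
move=> clK; rewrite -openC; change (@open A (\pi_Q @^-1` (~` (\pi_Q @` K)))).
suff -> : \pi_Q @^-1` (~` (\pi_Q @` K)) = ~` [set x | exists2 y, K y & theta x y].
  exact: closed_openC (saturation_closed clK).
apply/seteqP; split => x /= nK.
  by case=> y Ky xy; apply: nK; exists y => //; exact/quot_projP/cong_sym.
by case=> y Ky /quot_projP yx; apply: nK; exists y => //; exact: cong_sym.
Qed.

Hypothesis hausdorffA : hausdorff_space A.

Lemma quot_closed1 (q : Q) : closed [set q].
Proof.
rewrite -[q]quot_proj_repr -image_set1; apply: quot_proj_closed.
by apply: compact_closed => //; exact: compact_set1.
Qed.

Lemma quot_normal : normal_space Q.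
Proof.
(* [normal_openP] carries an irrelevant [realType] parameter. *)
apply/(@normal_openP Rdefinitions.R) => F G clF clG FG0.
have FG0' : \pi_Q @^-1` F `&` \pi_Q @^-1` G = set0.
  by rewrite -preimage_setI FG0 preimage_set0.
have [U [W [oU oW FU GW UW0]]] := (@normal_openP Rdefinitions.R A).1
  (compact_normal hausdorffA compactA) _ _
  ((continuous_closedP _).1 pi_continuous _ clF)
  ((continuous_closedP _).1 pi_continuous _ clG) FG0'.
have inner_open (X : set A) : open X -> open (~` (\pi_Q @` ~` X)).
  by move=> oX; apply/closed_openC/quot_proj_closed/open_closedC.
exists (~` (\pi_Q @` ~` U)), (~` (\pi_Q @` ~` W)); split.
- exact: inner_open.
- exact: inner_open.
- by move=> q Fq [x nUx xq]; apply: nUx; apply: FU; rewrite /= xq.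
- by move=> q Gq [x nWx xq]; apply: nWx; apply: GW; rewrite /= xq.
- apply/seteqP; split => // q [nU nW].
  suff : (U `&` W) (repr q) by rewrite UW0.
  split; apply: contrapT => nX; [apply: nU | apply: nW];
    by exists (repr q); rewrite ?quot_proj_repr.
Qed.

Lemma quot_separating_hom (q1 q2 : Q) :
  profinite E -> countable [set: Q] -> q1 <> q2 ->
  exists (B : discreteTopologicalType) (EB : ops Omega B) (g : Q -> B),
    [/\ finite_set [set: B], is_topological_algebra EB, continuous g,
        is_hom (quot_ops theta) EB g & g q1 <> g q2].
Proof.
move=> pA cQ q12; have [U [oU clU Uq1 nUq2]] := countable_normal_clopen_separation
  quot_normal cQ (@quot_closed1 q1) (@quot_closed1 q2) q12.
pose W := \pi_Q @^-1` U.
have oW : open W := oU.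
have clW : closed W := (continuous_closedP _).1 pi_continuous _ clU.
have synW := profinite_syntactic_nbhs pA oW clW.
have theta_syn : forall x y, theta x y -> syntactic E W x y.
  apply: sub_syntactic; [exact: cong_refl | exact: cong_compat |].
  by move=> x y /quot_projP xy; rewrite /W /= xy.
pose g (q : Q) := syntactic_proj E W (repr q).
have gE x : g (\pi_Q x) = syntactic_proj E W x.
  by apply/syntactic_projP/theta_syn/quot_projP; rewrite quot_proj_repr.
exists (syntactic_quotient E W), (@syntactic_ops _ _ E W), g; split.
- exact: syntactic_quotient_finite synW compactA.
- exact: discrete_topological_algebra.
- apply/quotient_continuous; have -> : g \o \pi_Q = syntactic_proj E W := funext gE.
  exact: syntactic_proj_continuous synW.
- by move=> n s q; rewrite /quot_ops gE syntactic_proj_hom.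
- move=> /syntactic_projP/(@syntactic_saturated _ _ E W) [W12 _].
  apply: nUq2; rewrite -[q2]quot_proj_repr; apply: W12.
  by rewrite /W /= quot_proj_repr.
Qed.

End ClosedQuotient.

Theorem corollary3p3 (Omega : signature) (A : topologicalType) (E : ops Omega A)
    (theta : closed_congruence E) :
  profinite E ->
  countable [set: quot_space theta] ->
  profinite (quot_ops theta).
Proof.
move=> pA cQ; have [_ cA hA _] := pA.
have sep := quot_separating_hom cA hA pA cQ.
have cQc : compact [set: quot_space theta] := quot_compact cA.
split => //.
- apply: topological_algebra_discrete_separation cQc _.
  by move=> x y /sep [B [EB [g [_ _ cg hg gxy]]]]; exists B, EB, g.
- apply: hausdorff_discrete_separation => x y /sep [B [EB [g [_ _ cg _ gxy]]]].
  by exists B, g.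
Qed.
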